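(* Let $r, s, m, n$ be positive integers, let $f: V(H_{n,m}) \rightarrow \{-r,s\}$ be a function, and let $q = \frac{1}{n} f(V(H_{n,m}))$. Then $H_{n,m}$ can be decomposed into $n$ vertex-disjoint directed $m$-paths $P_1, P_2, \ldots, P_n$ such that \[\lambda(q,r,s,m) \le f(V(P_i)) \le \Lambda(q,r,s,m)\] for all $1 \le i \le n$.
   Context: For a set $Y$ of vertices, $f(Y)=\sum_{y\in Y}f(y)$. For positive integers $n,m$, $H_{n,m}$ is the directed graph whose vertex set is the disjoint union of $V_1,\dots,V_m$ with $|V_i|=n$, and whose arc set is $\bigcup_{i=1}^{m-1}\{(v,w): v\in V_i, w\in V_{i+1}\}$. A directed $m$-path is a directed path with $m$ vertices. $L(r,s,m)=\{-rx+sy : x,y\in\mathbb{Z}, x,y\ge 0, x+y=m\}$, and for real $q\in[-rm,sm]$, $\lambda(q,r,s,m)=\max\{p\in L(r,s,m): p\le q\}$ and $\Lambda(q,r,s,m)=\min\{p\in L(r,s,m): p\ge q\}$. *)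

From mathcomp Require Import all_boot all_order all_algebra.
Set Implicit Arguments. Unset Strict Implicit. Unset Printing Implicit Defensive.
Import Order.TTheory GRing.Theory Num.Theory.
Local Open Scope ring_scope.

(* Vertices of H_{n,m}: pairs (i, j) with i : 'I_m the layer V_{i+1},
   j : 'I_n the index inside the layer. *)
Definition HV (n m : nat) : finType := ('I_m * 'I_n)%type.

Definition Harc (n m : nat) : rel (HV n m) :=
  fun v w => (v.1 : nat).+1 == (w.1 : nat).

Definition is_dpath (n m : nat) (p : seq (HV n m)) : bool :=
  if p is x :: t then path (@Harc n m) x t && uniq p else false.

Definition is_dkpath (n m k : nat) (p : seq (HV n m)) : bool :=
  is_dpath p && (size p == k).

Definition Lset (r s m : nat) : seq int :=
  [seq (- ((r * x)%N)%:Z + ((s * (m - x))%N)%:Z) | x <- iota 0 m.+1].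

(* lambda(q,r,s,m) = max { p in L : p <= q }  (defined for q in [-rm, sm];
   the default value -rm is the minimum of L) *)
Definition lambdaL (q : rat) (r s m : nat) : int :=
  \big[Order.max/(- ((r * m)%N)%:Z)]_(p <- Lset r s m | p%:~R <= q) p.

(* Lambda(q,r,s,m) = min { p in L : p >= q }  (default sm = max of L) *)
Definition LambdaL (q : rat) (r s m : nat) : int :=
  \big[Order.min/(((s * m)%N)%:Z)]_(p <- Lset r s m | q <= p%:~R) p.

(* Number the A vertices of value -r consecutively, layer by layer, and deal
   them to the n paths in round-robin fashion: the k-th one goes to path
   k mod n.  A layer holds at most n of them, so no path receives two vertices
   of one layer and every layer can be matched bijectively with the paths.
   Path j then receives x = #{k < A | k = j mod n} vertices of value -r, so
   x n < A + n and A < x n + n, and its weight -r x + s (m - x) lies in L(r,s,m);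
   since q = -r A/n + s (m - A/n), no point of L lies strictly between that
   weight and q. *)

From mathcomp Require Import all_boot all_order all_algebra zify.
Set Implicit Arguments. Unset Strict Implicit. Unset Printing Implicit Defensive.
Import Order.TTheory GRing.Theory Num.Theory.

(* (j - c) mod n, written without truncated subtraction. *)
Definition cyc_rank (n c j : nat) := (j + n - c %% n) %% n.

(* For j < n, the number of k < A with k = j mod n. *)
Definition residue_count (n j A : nat) := (A + (n.-1 - j)) %/ n.

Lemma divn_between n k x : k * n <= x < k.+1 * n -> x %/ n = k.
Proof.
case/andP=> lekx ltxk; have n_gt0 : 0 < n by case: n lekx ltxk => // _; rewrite muln0.
by apply/eqP; rewrite eqn_leq leq_divRL // lekx andbT -ltnS ltn_divLR.
Qed.

Lemma cyc_rank_lt n c j : 0 < n -> cyc_rank n c j < n.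
Proof. by rewrite ltn_mod. Qed.

Lemma cyc_rankE n c j : 0 < n -> j < n ->
  cyc_rank n c j = if c %% n <= j then j - c %% n else j + n - c %% n.
Proof.
move=> n_gt0 ltjn; have ltcn : c %% n < n by rewrite ltn_mod.
rewrite /cyc_rank; case: ifP => lecj; last by rewrite modn_small; lia.
by rewrite -addnBAC // modnDr modn_small; lia.
Qed.

Lemma cyc_rank_inj n c j j' : 0 < n -> j < n -> j' < n ->
  cyc_rank n c j = cyc_rank n c j' -> j = j'.
Proof.
move=> n_gt0 ltjn ltj'n /eqP; have ltcn : c %% n < n by rewrite ltn_mod.
by rewrite /cyc_rank -!addnBA 1?ltnW // eqn_modDr !modn_small // => /eqP.
Qed.

Lemma residue_countD n j c a : 0 < n -> j < n -> a <= n ->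
  residue_count n j (c + a) = residue_count n j c + (cyc_rank n c j < a).
Proof.
move=> n_gt0 ltjn lean; rewrite /residue_count cyc_rankE //.
rewrite (divn_eq c n) modnMDl modn_mod -!addnA !divnMDl // -addnA; congr (_ + _).
have : c %% n < n by rewrite ltn_mod.
set p := c %% n => ltpn.
case: ifP => lepj; case: ltnP => lta.
- by rewrite (@divn_between n 1 (p + _)) ?(@divn_between n 0) //; lia.
- by rewrite (@divn_between n 0 (p + _)) ?(@divn_between n 0) //; lia.
- by rewrite (@divn_between n 2 (p + _)) ?(@divn_between n 1) //; lia.
- by rewrite (@divn_between n 1 (p + _)) ?(@divn_between n 1) //; lia.
Qed.

Lemma sum_cyc_rank_lt n j (a : nat -> nat) M : 0 < n -> j < n -> (forall t, a t <= n) ->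
  \sum_(t < M) (cyc_rank n (\sum_(t' < t) a t') j < a t)
  = residue_count n j (\sum_(t < M) a t).
Proof.
move=> n_gt0 ltjn le_an; elim: M => [|M IH].
  by rewrite !big_ord0 /residue_count divn_small //; lia.
by rewrite !big_ord_recr /= IH residue_countD.
Qed.

Lemma residue_count_bounds n j A : 0 < n -> j < n ->
  residue_count n j A * n < A + n /\ A < residue_count n j A * n + n.
Proof.
move=> n_gt0 ltjn; rewrite /residue_count.
have := leq_trunc_div (A + (n.-1 - j)) n; have := ltn_ceil (A + (n.-1 - j)) n_gt0.
by rewrite mulSn; lia.
Qed.

Lemma path_succ_iota a k : path (fun x y => x.+1 == y) a (iota a.+1 k).
Proof. by elim: k a => [|k IH] a //=; rewrite eqxx IH. Qed.

Lemma layered_dkpath n m (g : 'I_m -> 'I_n) :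
  0 < m -> is_dkpath m [seq (i, g i) | i <- enum 'I_m].
Proof.
case: m g => // m g _; rewrite /is_dkpath size_map size_enum_ord eqxx andbT.
have uniq_p : uniq [seq ((i, g i) : HV n m.+1) | i <- enum 'I_m.+1].
  by rewrite map_inj_uniq ?enum_uniq // => i j [].
have := val_enum_ord m.+1.
case: (enum _) uniq_p => [|x t] //= uniq_p [val_x val_t].
rewrite /is_dpath uniq_p andbT path_map.
change (path (relpre (@nat_of_ord _) (fun a b => a.+1 == b)) x t).
by rewrite -path_map val_x val_t path_succ_iota.
Qed.

Lemma nth_filter_cat_predC (T : Type) (P : pred T) (s : seq T) x0 k :
  k < size s ->
  P (nth x0 (filter P s ++ filter (predC P) s) k) = (k < count P s).
Proof.
move=> lt_ks; rewrite nth_cat size_filter; case: ltnP => le_k.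
  by apply: (all_nthP x0 (filter_all P s)); rewrite size_filter.
apply/negbTE; apply: (all_nthP x0 (filter_all (predC P) s)).
by rewrite size_filter -(count_predC P s) in lt_ks *; lia.
Qed.

Section CyclicDealing.

Variables (n m : nat) (neg : pred (HV n m)).
Hypothesis n_gt0 : 0 < n.

(* Indexed by nat so that prefix sums over earlier layers can be written;
   it is 0 beyond the last layer. *)
Definition layer_neg (t : nat) : nat :=
  oapp (fun i : 'I_m => count (fun k => neg (i, k)) (enum 'I_n)) 0 (insub t).

Lemma layer_negE (i : 'I_m) : layer_neg i = count (fun k => neg (i, k)) (enum 'I_n).
Proof. by rewrite /layer_neg valK. Qed.

Lemma sum_layer_neg : \sum_(t < m) layer_neg t = count neg (enum (HV n m)).
Proof.
under eq_bigr => i _ do rewrite layer_negE -sum1_count big_enum_cond big_mkcond.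
by rewrite pair_big -sum1_count big_enum_cond [RHS]big_mkcond; apply: eq_bigr => -[].
Qed.

Definition layer_order (i : 'I_m) : seq 'I_n :=
  filter (fun k => neg (i, k)) (enum 'I_n) ++ filter (predC (fun k => neg (i, k))) (enum 'I_n).

Lemma perm_layer_order i : perm_eq (layer_order i) (enum 'I_n).
Proof. by rewrite /layer_order perm_filterC. Qed.

Lemma size_layer_order i : size (layer_order i) = n.
Proof. by rewrite (perm_size (perm_layer_order i)) size_enum_ord. Qed.

Definition deal (i : 'I_m) (j : 'I_n) : 'I_n :=
  nth j (layer_order i) (cyc_rank n (\sum_(t < i) layer_neg t) j).

Lemma deal_inj i : injective (deal i).
Proof.
move=> j j' /eqP; rewrite /deal [nth j' _ _](set_nth_default j) ?size_layer_order ?cyc_rank_lt //.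
rewrite nth_uniq ?size_layer_order ?cyc_rank_lt ?(perm_uniq (perm_layer_order i)) ?enum_uniq //.
by move/eqP/cyc_rank_inj => eq_j; apply/val_inj/eq_j.
Qed.

Lemma neg_deal i j :
  neg (i, deal i j) = (cyc_rank n (\sum_(t < i) layer_neg t) j < layer_neg i).
Proof.
by rewrite layer_negE; apply: nth_filter_cat_predC; rewrite size_enum_ord cyc_rank_lt.
Qed.

Definition dealt_path (j : 'I_n) : seq (HV n m) := [seq (i, deal i j) | i <- enum 'I_m].

Lemma dealt_path_partition v : exists! j, v \in dealt_path j.
Proof.
case: v => i k; exists (invF (@deal_inj i) k); split.
  by apply/mapP; exists i; rewrite ?mem_enum ?f_invF.
by move=> j /mapP [i' _ [-> ->]]; rewrite invF_f.
Qed.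

Lemma count_neg_dealt_path j :
  count neg (dealt_path j) = residue_count n j (count neg (enum (HV n m))).
Proof.
rewrite -sum_layer_neg -sum_cyc_rank_lt //; last first.
  move=> t; rewrite /layer_neg; case: insub => //= i.
  by rewrite -[leqRHS](size_enum_ord n) count_size.
rewrite count_map -sum1_count big_enum_cond big_mkcond.
by apply: eq_bigr => i _; rewrite /= neg_deal.
Qed.

End CyclicDealing.

Local Open Scope ring_scope.

Definition Lpoint (r s M x : nat) : int := (s * M)%N%:Z - ((r + s) * x)%N%:Z.

Lemma Lset_Lpoint r s m x : (x <= m)%N ->
  - (r * x)%N%:Z + (s * (m - x))%N%:Z = Lpoint r s m x.
Proof. by rewrite /Lpoint; nia. Qed.

Lemma Lpoint_le r s M x y : (0 < r + s)%N ->
  (Lpoint r s M x <= Lpoint r s M y) = (y <= x)%N.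
Proof. by move=> rs_gt0; rewrite /Lpoint lerD2l lerN2 lez_nat leq_pmul2l. Qed.

Lemma lambdaL_le q r s m (p : int) : - (r * m)%N%:Z <= p ->
  (forall x, (x <= m)%N -> (Lpoint r s m x)%:~R <= q -> Lpoint r s m x <= p) ->
  lambdaL q r s m <= p.
Proof.
move=> lo_p hp; rewrite /lambdaL /Lset big_map big_seq_cond.
apply: (big_ind (fun l => l <= p)) => // [l1 l2|x]; first by rewrite ge_max => ->.
rewrite mem_iota ltnS => /andP [/andP [_ le_xm]].
by rewrite Lset_Lpoint //; apply: hp.
Qed.

Lemma LambdaL_ge q r s m (p : int) : p <= (s * m)%N%:Z ->
  (forall x, (x <= m)%N -> q <= (Lpoint r s m x)%:~R -> p <= Lpoint r s m x) ->
  p <= LambdaL q r s m.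
Proof.
move=> hi_p hp; rewrite /LambdaL /Lset big_map big_seq_cond.
apply: (big_ind (fun l => p <= l)) => // [l1 l2|x]; first by rewrite le_min => ->.
rewrite mem_iota ltnS => /andP [/andP [_ le_xm]].
by rewrite Lset_Lpoint //; apply: hp.
Qed.

Lemma Lpoint_le_mean r s m n A y : (0 < n)%N -> (0 < r + s)%N ->
  ((Lpoint r s m y)%:~R <= (Lpoint r s (m * n) A)%:~R / n%:R :> rat) = (A <= y * n)%N.
Proof.
move=> n_gt0 rs_gt0; rewrite ler_pdivlMr ?ltr0n // -[n%:R]/(n%:Z%:~R) -intrM ler_int.
rewrite /Lpoint mulrBl -!PoszM mulnA lerD2l lerN2 lez_nat -mulnA leq_pmul2l //.
Qed.

Lemma mean_le_Lpoint r s m n A y : (0 < n)%N -> (0 < r + s)%N ->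
  ((Lpoint r s (m * n) A)%:~R / n%:R <= (Lpoint r s m y)%:~R :> rat) = (y * n <= A)%N.
Proof.
move=> n_gt0 rs_gt0; rewrite ler_pdivrMr ?ltr0n // -[n%:R]/(n%:Z%:~R) -intrM ler_int.
rewrite /Lpoint mulrBl -!PoszM mulnA lerD2l lerN2 lez_nat -mulnA leq_pmul2l //.
Qed.

Lemma lambdaL_Lpoint_LambdaL r s m n A x (q : rat) : (0 < n)%N -> (0 < r + s)%N ->
  (A <= m * n)%N -> (x * n < A + n)%N -> (A < x * n + n)%N ->
  q = (Lpoint r s (m * n) A)%:~R / n%:R ->
  lambdaL q r s m <= Lpoint r s m x <= LambdaL q r s m.
Proof.
move=> n_gt0 rs_gt0 le_A lt_xA lt_Ax ->; have le_xm : (x <= m)%N by nia.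
apply/andP; split.
  apply: lambdaL_le => [|y le_ym]; first by rewrite /Lpoint; nia.
  by rewrite Lpoint_le_mean // Lpoint_le //; nia.
apply: LambdaL_ge => [|y le_ym]; first by rewrite /Lpoint; nia.
by rewrite mean_le_Lpoint // Lpoint_le //; nia.
Qed.

Lemma sum_two_valued (T : Type) r s (f : T -> int) (p : seq T) :
  (forall v, f v = - r%:Z \/ f v = s%:Z) ->
  \sum_(v <- p) f v = Lpoint r s (size p) (count (fun v => f v == - r%:Z) p).
Proof.
move=> hf; elim: p => [|v p IH]; first by rewrite big_nil /Lpoint !muln0.
by rewrite big_cons IH /Lpoint /=; case: (hf v) => ->; case: eqP => /= e; nia.
Qed.

Theorem theorem4p3 (r s m n : nat) (hr : (0 < r)%N) (hs : (0 < s)%N)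
  (hm : (0 < m)%N) (hn : (0 < n)%N) (f : HV n m -> int)
  (hf : forall v, f v = - (r%:Z) \/ f v = s%:Z) :
  let q : rat := (\sum_(v : HV n m) f v)%:~R / n%:R in
  exists P : 'I_n -> seq (HV n m),
    (forall i, is_dkpath m (P i)) /\
    (forall v : HV n m, exists! i, v \in P i) /\
    (forall i, lambdaL q r s m <= \sum_(v <- P i) f v <= LambdaL q r s m).
Proof.
move=> q; pose neg v := f v == - r%:Z; pose A := count neg (enum (HV n m)).
exists (dealt_path neg); split; first by move=> j; apply: layered_dkpath.
split; first exact: dealt_path_partition.
move=> j; rewrite (sum_two_valued _ hf) size_map size_enum_ord count_neg_dealt_path //.
have [lt_xA lt_Ax] := residue_count_bounds A hn (ltn_ord j).
apply: (lambdaL_Lpoint_LambdaL (n := n) (A := A)) => //; first by rewrite addn_gt0 hr.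
  by apply: leq_trans (count_size _ _) _; rewrite -cardT card_prod !card_ord.
by rewrite /q -big_enum (sum_two_valued _ hf) -cardT card_prod !card_ord.
Qed.
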